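(* Let $m\ge 2$, $\mathfrak m=1/(2m-1)$, and $s_n=\sum_{k=0}^{n-1}(-\mathfrak m)^k$ for $n\ge 1$, $s_0=0$. Let $x_0x_1x_2\dots$ be a random freely reduced infinite word in $m$ generators. For any letters $x,y$ (not necessarily distinct) and any $n\ge1$, the conditional probability $P_n(x,y)=\Pr(x_n=x\mid x_0=y)$ lies between $\mathfrak m\cdot s_{n-1}$ and $\mathfrak m\cdot s_n$ (i.e. between the smaller and the larger of these two numbers). In particular, $$\frac{2m-2}{(2m-1)^2}\le \Pr(x_2=x\mid x_0=y)\le \frac1{2m-1}.$$
   Context: Letters are the $2m$ elements $a_1^{\pm1},\dots,a_m^{\pm1}$. A random freely reduced infinite word is chosen so that $x_0$ is uniform among the $2m$ letters and each $x_{i+1}$ is uniform among the $2m-1$ letters different from $x_i^{-1}$. *)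

From HB Require Import structures.
From mathcomp Require Import all_boot all_order all_algebra.
Set Implicit Arguments. Unset Strict Implicit. Unset Printing Implicit Defensive.
Import Order.TTheory GRing.Theory Num.Theory.
Local Open Scope ring_scope.

(* Letters a_i^{+1} / a_i^{-1}: (i, false) = a_i, (i, true) = a_i^{-1}. *)
Definition letter (m : nat) : finType := ('I_m * bool)%type.

Definition linv (m : nat) (a : letter m) : letter m := (a.1, ~~ a.2).

Definition word (m n : nat) := {ffun 'I_n.+1 -> letter m}.

Definition reduced (m n : nat) (w : word m n) : bool :=
  [forall i : 'I_n, w (lift ord0 i) != linv (w (widen_ord (leqnSn n) i))].

(* Law of the initial segment x_0 ... x_n of the random freely reduced word:
   x_0 uniform among 2m letters, each next letter uniform among the 2m-1
   letters different from the inverse of the previous one. *)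
Definition word_prob (R : realFieldType) (m n : nat) (w : word m n) : R :=
  if reduced w then ((2 * m)%:R)^-1 * (((2 * m).-1)%:R ^+ n)^-1 else 0.

Definition pr_first (R : realFieldType) (m n : nat) (y : letter m) : R :=
  \sum_(w : word m n | w ord0 == y) word_prob R w.

Definition pr_joint (R : realFieldType) (m n : nat) (x y : letter m) : R :=
  \sum_(w : word m n | (w ord0 == y) && (w ord_max == x)) word_prob R w.

Definition Pn (R : realFieldType) (m n : nat) (x y : letter m) : R :=
  pr_joint R n x y / pr_first R n y.

Definition frakm (R : realFieldType) (m : nat) : R := (((2 * m).-1)%:R)^-1.

Definition s_ (R : realFieldType) (m n : nat) : R :=
  \sum_(k < n) (- frakm R m) ^+ k.

From HB Require Import structures.
From mathcomp Require Import all_boot all_order all_algebra.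
From mathcomp Require Import zify ring lra.
Set Implicit Arguments. Unset Strict Implicit. Unset Printing Implicit Defensive.
Import Order.TTheory GRing.Theory Num.Theory.
Local Open Scope ring_scope.

(* Write q = 1/(2m-1).  Summing the law of x_0 ... x_(n+1) over the last
   letter shows that the marginal of x_0 stays uniform and that
   P_(n+1)(x,y) = q (1 - P_n(x^-1,y)), with P_0(x,y) = [x = y].
   The numbers a_n = q s_n obey the same recursion a_(n+1) = q (1 - a_n), and
   t |-> q (1 - t) is decreasing, so it maps the interval between a_(n-1) and
   a_n onto the one between a_n and a_(n+1); induction from P_1 in {0, q}
   concludes. *)

Lemma linvK m : involutive (@linv m).
Proof. by case=> i b; rewrite /linv /= negbK. Qed.

Lemma eq_linv_sym m (x z : letter m) : (x == linv z) = (z == linv x).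
Proof. by apply/eqP/eqP => ->; rewrite linvK. Qed.

Lemma card_neq_letter m (b : letter m) : #|[pred a : letter m | a != b]| = (2 * m).-1.
Proof.
rewrite (@eq_card _ _ (predC1 b)) // cardC1 card_prod card_ord card_bool.
by rewrite mulnC.
Qed.

Lemma frakmE (R : realFieldType) m : frakm R m = ((2 * m - 1)%:R)^-1.
Proof. by rewrite /frakm subn1. Qed.

Lemma s0 (R : realFieldType) m : s_ R m 0 = 0.
Proof. exact: big_ord0. Qed.

Lemma s_S (R : realFieldType) m k : s_ R m k.+1 = 1 - frakm R m * s_ R m k.
Proof.
rewrite /s_ big_ord_recl expr0 mulr_sumr -sumrN; congr (_ + _).
by apply: eq_bigr => i _; rewrite lift0 exprS mulNr.
Qed.

Lemma between_scale_compl (R : realFieldType) (f u v t : R) : 0 <= f ->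
  Num.min u v <= t -> t <= Num.max u v ->
  Num.min (f * (1 - u)) (f * (1 - v)) <= f * (1 - t) /\
  f * (1 - t) <= Num.max (f * (1 - u)) (f * (1 - v)).
Proof.
move=> f_ge0; case: (leP u v) => ? ? ?;
  case: (leP (f * (1 - u)) (f * (1 - v))) => ?; split; nra.
Qed.

Section WordRcons.
Variables m n : nat.

Definition word_rcons (w : word m n) (a : letter m) : word m n.+1 :=
  [ffun i : 'I_n.+2 => if (i <= n)%N then w (inord i) else a].

Definition word_belast (w : word m n.+1) : word m n :=
  [ffun i : 'I_n.+1 => w (inord i)].

Lemma word_rcons0 (w : word m n) a : word_rcons w a ord0 = w ord0.
Proof. by rewrite ffunE /=; congr (w _); apply: val_inj; rewrite /= inordK. Qed.

Lemma word_rcons_last (w : word m n) a : word_rcons w a ord_max = a.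
Proof. by rewrite ffunE /= ltnn. Qed.

Lemma word_belast_rcons (w : word m n) a : word_belast (word_rcons w a) = w.
Proof.
apply/ffunP => j; have hj := ltn_ord j.
rewrite !ffunE inordK; last by lia.
by rewrite (_ : (j <= n)%N = true) ?inord_val //; lia.
Qed.

Lemma word_rcons_belast (w : word m n.+1) :
  word_rcons (word_belast w) (w ord_max) = w.
Proof.
apply/ffunP => i; have hi := ltn_ord i.
rewrite !ffunE; case: ifP => h.
  by rewrite inordK ?inord_val //; lia.
by congr (w _); apply: val_inj => /=; lia.
Qed.

Lemma sum_word_rcons (R : nmodType) (F : word m n.+1 -> R) :
  \sum_(w' : word m n.+1) F w' =
  \sum_(w : word m n) \sum_(a : letter m) F (word_rcons w a).
Proof.
rewrite pair_big /= (reindex (fun p : word m n * letter m => word_rcons p.1 p.2)) //.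
exists (fun w' => (word_belast w', w' ord_max)) => [[w a] _ | w' _] /=.
  by rewrite word_belast_rcons word_rcons_last.
by rewrite word_rcons_belast.
Qed.

End WordRcons.

Lemma reducedE m n (w : word m n) :
  reduced w = [forall i : 'I_n, w (inord i.+1) != linv (w (inord i))].
Proof.
apply: eq_forallb => i; congr (w _ != linv (w _)); apply: val_inj => /=.
  by rewrite inordK ?ltnS.
by rewrite inordK // ltnS ltnW.
Qed.

Lemma reduced_rcons m n (w : word m n) a :
  reduced (word_rcons w a) = reduced w && (a != linv (w ord_max)).
Proof.
have inord_max : (inord n : 'I_n.+1) = ord_max by apply: val_inj; rewrite /= inordK.
rewrite !reducedE; apply/forallP/andP => [H | [/forallP H Ha] i].
- split; last by have := H ord_max; rewrite !ffunE /= !inordK // ltnn leqnn inord_max.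
  apply/forallP => i; have := H (widen_ord (leqnSn _) i); have hi := ltn_ord i.
  by rewrite !ffunE /= !inordK ?hi ?(ltnW hi); lia.
- have hi := ltn_ord i; rewrite !ffunE /= !inordK; try lia.
  rewrite (_ : (i <= n)%N = true); last by lia.
  case: (ltnP i n) => hin; first exact: (H (Ordinal hin)).
  by rewrite (_ : nat_of_ord i = n) ?inord_max //; lia.
Qed.

Section ConditionalLaw.
Variables (R : realFieldType) (m : nat).
Hypothesis m_gt0 : (0 < m)%N.

Lemma frakm_gt0 : 0 < frakm R m.
Proof. by rewrite invr_gt0 ltr0n; lia. Qed.

Lemma word_prob_rcons n (w : word m n) a :
  word_prob R (word_rcons w a) =
  if a != linv (w ord_max) then word_prob R w * frakm R m else 0.
Proof.
rewrite /word_prob /frakm reduced_rcons; case: (reduced w); case: (a != _);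
  by rewrite /= ?mul0r // exprSr invfM mulrA.
Qed.

Lemma pr_first_S n (y : letter m) : pr_first R n.+1 y = pr_first R n y.
Proof.
rewrite /pr_first big_mkcond sum_word_rcons [RHS]big_mkcond.
apply: eq_bigr => w _; under eq_bigr do rewrite word_rcons0.
case: (w ord0 == y); last by rewrite big1.
under eq_bigr do rewrite word_prob_rcons.
rewrite -big_mkcond sumr_const card_neq_letter -mulr_natr -mulrA mulVf ?mulr1 //.
by rewrite pnatr_eq0; lia.
Qed.

Lemma pr_first0 (y : letter m) : pr_first R 0 y = (2 * m)%:R^-1.
Proof.
rewrite /pr_first (bigD1 [ffun _ => y]) ?ffunE //= big1 ?addr0.
  by rewrite /word_prob (_ : reduced _ = true) ?invr1 ?mulr1 //; apply/forallP => [[]].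
move=> w /andP [/eqP w0 /negP]; case; apply/eqP/ffunP => i.
by rewrite ord1 ffunE.
Qed.

Lemma pr_firstE n (y : letter m) : pr_first R n y = (2 * m)%:R^-1.
Proof. by elim: n => [|n IH]; rewrite ?pr_first_S ?pr_first0. Qed.

Lemma pr_first_neq0 n (y : letter m) : pr_first R n y != 0.
Proof. by rewrite pr_firstE invr_eq0 pnatr_eq0; lia. Qed.

Lemma pr_joint0 (x y : letter m) :
  pr_joint R 0 x y = if x == y then pr_first R 0 y else 0.
Proof.
rewrite /pr_joint /pr_first (_ : ord_max = ord0 :> 'I_1); last exact: val_inj.
case: eqVneq => [-> | neq_xy]; first by apply: eq_bigl => w; rewrite andbb.
by rewrite big1 // => w /andP [/eqP w0 /eqP wx]; rewrite -w0 -wx eqxx in neq_xy.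
Qed.

Lemma pr_joint_S n (x y : letter m) :
  pr_joint R n.+1 x y = frakm R m * (pr_first R n y - pr_joint R n (linv x) y).
Proof.
rewrite /pr_joint big_mkcond sum_word_rcons.
under eq_bigr => w _.
  rewrite (bigD1 x) //= word_rcons0 word_rcons_last eqxx andbT big1 ?addr0; last first.
    by move=> a neq_ax; rewrite word_rcons0 word_rcons_last (negbTE neq_ax) andbF.
  rewrite word_prob_rcons; over.
rewrite /pr_first [in RHS](bigID (fun w : word m n => w ord_max == linv x)) /= addrC addrK.
rewrite mulr_sumr [RHS]big_mkcond; apply: eq_bigr => w _.
by rewrite eq_linv_sym mulrC; case: (w ord0 == y); case: (w ord_max == linv x).
Qed.

Lemma Pn0 (x y : letter m) : Pn R 0 x y = (x == y)%:R.
Proof.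
by rewrite /Pn pr_joint0; case: (x == y); rewrite ?mul0r // divff ?pr_first_neq0.
Qed.

Lemma Pn_S n (x y : letter m) :
  Pn R n.+1 x y = frakm R m * (1 - Pn R n (linv x) y).
Proof.
by rewrite /Pn pr_joint_S pr_first_S -mulrA mulrBl divff ?pr_first_neq0.
Qed.

Lemma Pn_between n (x y : letter m) :
  Num.min (frakm R m * s_ R m n) (frakm R m * s_ R m n.+1) <= Pn R n.+1 x y /\
  Pn R n.+1 x y <= Num.max (frakm R m * s_ R m n) (frakm R m * s_ R m n.+1).
Proof.
have f_ge0 := ltW frakm_gt0.
elim: n x y => [|n IH] x y.
  rewrite Pn_S Pn0 s_S s0 !mulr0 subr0 mulr1 (min_l f_ge0) (max_r f_ge0).
  by case: (_ == _); rewrite /= ?mulr0n ?mulr1n; split; lra.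
have [lo hi] := IH (linv x) y.
by rewrite Pn_S; have := between_scale_compl f_ge0 lo hi; rewrite -!s_S.
Qed.

Lemma Pn2_between (x y : letter m) :
  frakm R m * (1 - frakm R m) <= Pn R 2 x y <= frakm R m.
Proof.
have [lo hi] := Pn_between 1 x y.
have f_gt0 := frakm_gt0.
have f_le1 : frakm R m <= 1 by rewrite invf_le1 ?ler1n ?ltr0n; lia.
have le_f : frakm R m * (1 - frakm R m) <= frakm R m by nra.
rewrite !s_S s0 mulr0 subr0 mulr1 (min_r le_f) (max_l le_f) in lo hi.
by rewrite lo hi.
Qed.

Lemma frakm_mul_compl :
  frakm R m * (1 - frakm R m) = (2 * m - 2)%:R / ((2 * m - 1)%:R ^+ 2).
Proof.
rewrite frakmE (_ : (2 * m - 1 = (2 * m - 2).+1)%N); last by lia.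
have num_ge0 : 0 <= (2 * m - 2)%:R :> R by rewrite ler0n.
by rewrite -natr1; field; lra.
Qed.

End ConditionalLaw.

Theorem corollary2p2 (R : realFieldType) (m : nat) (hm : (2 <= m)%N) :
  (forall (n : nat) (x y : letter m), (1 <= n)%N ->
     Num.min (frakm R m * s_ R m n.-1) (frakm R m * s_ R m n) <= Pn R n x y /\
     Pn R n x y <= Num.max (frakm R m * s_ R m n.-1) (frakm R m * s_ R m n)) /\
  (forall x y : letter m,
     ((2 * m - 2)%:R / ((2 * m - 1)%:R ^+ 2) <= Pn R 2 x y /\
      Pn R 2 x y <= ((2 * m - 1)%:R)^-1 :> R)).
Proof.
have m_gt0 : (0 < m)%N by lia.
split=> [[|n] x y // _ | x y]; first exact: Pn_between.
have /andP[lo hi] := Pn2_between R m_gt0 x y.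
by rewrite -frakm_mul_compl // -frakmE.
Qed.
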